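(* Let $n\geq 2$ and let $\mathcal{G}=(\mathcal{V},\mathcal{E})$ be a directed graph on $\mathcal{V}=\{1,\ldots,n\}$ in which every node has at least one outgoing edge. Let $A=(a_{ij})\in\mathbb{R}^{n\times n}$ be its hyperlink matrix, let $m\in(0,1)$, and let $x^*\in\mathbb{R}^n$ be the PageRank vector. Consider the iteration with initial states $x(0)=z(0)=\frac{m}{n}\mathbf{1}_n$ and, for $k\geq 0$, $$x(k+1)=x(k)+(1-m)Az(k),\qquad z(k+1)=(1-m)Az(k).$$ Then: (i) $z(k)\to 0$ as $k\to\infty$; (ii) $x(k)\leq x(k+1)\leq x^*$ for all $k\geq 0$; (iii) $x(k)\to x^*$ as $k\to\infty$.
   Context: Write $(i,j)\in\mathcal{E}$ if node (page) $i$ has a link to page $j$. $\mathcal{L}_j^{\text{out}}=\{i:(j,i)\in\mathcal{E}\}$ and $n_j=|\mathcal{L}_j^{\text{out}}|\geq 1$. The hyperlink matrix is defined by $a_{ij}=1/n_j$ if $i\in\mathcal{L}_j^{\text{out}}$ and $a_{ij}=0$ otherwise; it is column stochastic. The PageRank vector $x^*$ is the vector satisfying $x^*=(1-m)Ax^*+\frac{m}{n}\mathbf{1}_n$ and $\mathbf{1}_n^Tx^*=1$, where $\mathbf{1}_n$ is the all-ones vector. Inequalities between vectors are entrywise. *)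

From HB Require Import structures.
From mathcomp Require Import all_boot all_order all_algebra.
From mathcomp Require Import all_classical all_reals all_analysis.
Set Implicit Arguments. Unset Strict Implicit. Unset Printing Implicit Defensive.
Import Order.TTheory GRing.Theory Num.Theory.
Local Open Scope ring_scope.

(* A directed graph on the node set 'I_n (nodes 0..n-1 stand for 1..n):
   [e j i] means there is an edge (j,i), i.e. page j links to page i. *)

Definition out_nbrs (n : nat) (e : rel 'I_n) (j : 'I_n) : {set 'I_n} :=
  [set i | e j i].
Definition outdeg (n : nat) (e : rel 'I_n) (j : 'I_n) : nat := #|out_nbrs e j|.

Definition no_dangling (n : nat) (e : rel 'I_n) : Prop :=
  forall j : 'I_n, (1 <= outdeg e j)%N.

Definition hyperlink (R : fieldType) (n : nat) (e : rel 'I_n) : 'M[R]_n :=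
  \matrix_(i, j) (if i \in out_nbrs e j then (outdeg e j)%:R^-1 else 0).

Definition ones (R : ringType) (n : nat) : 'cV[R]_n := const_mx 1.

Definition is_pagerank (R : fieldType) (n : nat) (A : 'M[R]_n) (m : R)
    (xs : 'cV[R]_n) : Prop :=
  xs = (1 - m) *: (A *m xs) + (m / n%:R) *: ones R n /\
  (ones R n)^T *m xs = 1.

Fixpoint zseq (R : fieldType) (n : nat) (A : 'M[R]_n) (m : R) (k : nat)
  : 'cV[R]_n :=
  match k with
  | 0 => (m / n%:R) *: ones R n
  | k'.+1 => (1 - m) *: (A *m zseq A m k')
  end.

Fixpoint xseq (R : fieldType) (n : nat) (A : 'M[R]_n) (m : R) (k : nat)
  : 'cV[R]_n :=
  match k with
  | 0 => (m / n%:R) *: ones R n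
  | k'.+1 => xseq A m k' + (1 - m) *: (A *m zseq A m k')
  end.

Definition vle (R : numDomainType) (n : nat) (u v : 'cV[R]_n) : Prop :=
  forall i : 'I_n, u i 0 <= v i 0.

From HB Require Import structures.
From mathcomp Require Import all_boot all_order all_algebra.
From mathcomp Require Import all_classical all_reals all_analysis.
Import Order.TTheory GRing.Theory Num.Theory.
Import numFieldNormedType.Exports.
Local Open Scope classical_set_scope.
Local Open Scope ring_scope.

(* With [T u = (1 - m) A u], the iteration reads [z(k) = T^k z(0)] and
   [x(k) = z(0) + ... + z(k)].  Since [A] is nonnegative and column stochastic,
   [T] contracts the l1 norm by the factor [1 - m], so [T^k v -> 0] for every [v].
   The fixed-point equation gives [z(0) = x* - T x*], hence the telescoping
   identity [x(k) = x* - T^(k+1) x*] and [x(k) -> x*].  The increments [z(k)]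
   are nonnegative, so [x(k)] is nondecreasing and therefore lies below its
   limit [x*]. *)

Lemma continuous_mxentry {R : numFieldType} {p q : nat} (i : 'I_p) (j : 'I_q) :
  continuous (fun M : 'M[R]_(p, q) => M i j).
Proof.
move=> M A /nbhs_ballP[e /= e0 eA].
by apply/nbhs_ballP; exists e => //= N [_ MN]; apply: eA.
Qed.

Lemma nondecreasing_cvg_vle {R : realFieldType} {n : nat} (u : nat -> 'cV[R]_n)
    (l : 'cV[R]_n) :
  (forall k, vle (u k) (u k.+1)) -> u k @[k --> \oo] --> l ->
  forall k, vle (u k) l.
Proof.
move=> u_incr u_cvg k i.
have ui_cvg : u j i 0 @[j --> \oo] --> l i 0.
  exact: (continuous_cvg _ (continuous_mxentry i 0 l) u_cvg).
apply: (cvgr_to_ge ui_cvg); near=> j.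
have /nondecreasing_seqP ui_incr : forall j, u j i 0 <= u j.+1 i 0.
  by move=> ?; apply: u_incr.
by apply: ui_incr; near: j; exists k.
Unshelve. all: by end_near.
Qed.

Definition damped {R : pzRingType} {n : nat} (A : 'M[R]_n) (c : R)
  (u : 'cV[R]_n) : 'cV[R]_n := c *: (A *m u).

Lemma iter_dampedB {R : pzRingType} {n : nat} (A : 'M[R]_n) c k (u v : 'cV[R]_n) :
  iter k (damped A c) (u - v) = iter k (damped A c) u - iter k (damped A c) v.
Proof. by elim: k => //= k ->; rewrite /damped mulmxBr scalerBr. Qed.

Definition norm1 {R : numDomainType} {n : nat} (v : 'cV[R]_n) : R :=
  \sum_i `|v i 0|.

Lemma norm1Z {R : numDomainType} {n : nat} (a : R) (v : 'cV[R]_n) :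
  norm1 (a *: v) = `|a| * norm1 v.
Proof. by rewrite /norm1 mulr_sumr; apply: eq_bigr => i _; rewrite mxE normrM. Qed.

Lemma mxentry_le_norm1 {R : numDomainType} {n : nat} (v : 'cV[R]_n) i :
  `|v i 0| <= norm1 v.
Proof. by rewrite /norm1 (bigD1 i) //= lerDl sumr_ge0. Qed.

Section ColumnStochastic.
Context {R : numDomainType} {n : nat} {A : 'M[R]_n} {c : R}.
Hypothesis A_ge0 : forall i j, 0 <= A i j.
Hypothesis A_colsum : forall j, \sum_i A i j = 1.
Hypothesis c_ge0 : 0 <= c.

Lemma norm1_stochastic_mul (v : 'cV[R]_n) : norm1 (A *m v) <= norm1 v.
Proof.
apply: (@le_trans _ _ (\sum_i \sum_j A i j * `|v j 0|)).
  apply: ler_sum => i _; rewrite mxE.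
  apply: le_trans (ler_norm_sum _ _ _) _; apply: ler_sum => j _.
  by rewrite normrM ger0_norm.
by rewrite exchange_big ler_sum // => j _; rewrite -mulr_suml A_colsum mul1r.
Qed.

Lemma norm1_iter_damped k (v : 'cV[R]_n) :
  norm1 (iter k (damped A c) v) <= c ^+ k * norm1 v.
Proof.
elim: k => [|k IH] /=; first by rewrite mul1r.
rewrite norm1Z (ger0_norm c_ge0) exprS -mulrA ler_wpM2l //.
exact: le_trans (norm1_stochastic_mul _) IH.
Qed.

Lemma iter_damped_ge0 k (v : 'cV[R]_n) :
  (forall i, 0 <= v i 0) -> forall i, 0 <= iter k (damped A c) v i 0.
Proof.
move=> v_ge0; elim: k => [|k IH] i //=.
by rewrite !mxE mulr_ge0 // sumr_ge0 // => j _; rewrite mulr_ge0.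
Qed.

End ColumnStochastic.

Lemma iter_damped_cvg0 {R : realType} {n : nat} {A : 'M[R]_n} {c : R}
    (v : 'cV[R]_n) :
  (forall i j, 0 <= A i j) -> (forall j, \sum_i A i j = 1) -> 0 <= c < 1 ->
  iter k (damped A c) v @[k --> \oo] --> (0 : 'cV[R]_n).
Proof.
move=> A_ge0 A_colsum /andP[c_ge0 c_lt1].
have geom_cvg0 : c ^+ k * norm1 v @[k --> \oo] --> (0 : R).
  rewrite -(mul0r (norm1 v)); apply: cvgMr_tmp; apply: cvg_expr.
  by rewrite (ger0_norm c_ge0).
apply/cvgr0Pnorm_le => eps eps_gt0.
near=> k; rewrite -/(mx_norm _) mx_normrE; apply: bigmax_le => [|[i j] _ /=].
  exact: ltW.
rewrite (ord1 j); apply: le_trans (mxentry_le_norm1 _ i) _.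
apply: le_trans (norm1_iter_damped A_ge0 A_colsum c_ge0 _ _) _.
apply: le_trans (ler_norm _) _; near: k.
exact: cvgr0_norm_le geom_cvg0 _ eps_gt0.
Unshelve. all: by end_near.
Qed.

Lemma hyperlink_ge0 (R : numFieldType) {n : nat} (e : rel 'I_n) i j :
  0 <= hyperlink R e i j.
Proof. by rewrite mxE; case: ifP. Qed.

Lemma hyperlink_colsum (R : numFieldType) {n : nat} (e : rel 'I_n) :
  no_dangling e -> forall j, \sum_i hyperlink R e i j = 1.
Proof.
move=> outdeg_gt0 j.
under eq_bigr do rewrite mxE.
rewrite -big_mkcond /= sumr_const -[#|_|]/(outdeg e j).
by rewrite -[_ *+ outdeg e j]mulr_natr mulVf // pnatr_eq0 -lt0n outdeg_gt0.
Qed.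

Lemma zseqE {R : fieldType} {n : nat} (A : 'M[R]_n) (m : R) k :
  zseq A m k = iter k (damped A (1 - m)) ((m / n%:R) *: ones R n).
Proof. by elim: k => //= k ->. Qed.

Lemma xseq_fixpointE {R : fieldType} {n : nat} {A : 'M[R]_n} {m : R}
    {xs : 'cV[R]_n} :
  xs = damped A (1 - m) xs + (m / n%:R) *: ones R n ->
  forall k, xseq A m k = xs - iter k.+1 (damped A (1 - m)) xs.
Proof.
move=> xs_fix; have z0E : (m / n%:R) *: ones R n = xs - damped A (1 - m) xs.
  by rewrite {1}xs_fix addrAC subrr add0r.
elim=> [|k IH] /=; first exact: z0E.
rewrite IH zseqE z0E iter_dampedB -iterSr.
by rewrite mulmxBr scalerBr addrA subrK.
Qed.

Theorem lemma1 (R : realType) (n : nat) (e : rel 'I_n) (m : R)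
    (xs : 'cV[R]_n) :
  (2 <= n)%N ->
  no_dangling e ->
  0 < m < 1 ->
  is_pagerank (hyperlink R e) m xs ->
  [/\ zseq (hyperlink R e) m k @[k --> \oo] --> (0 : 'cV[R]_n),
      (forall k : nat,
         vle (xseq (hyperlink R e) m k) (xseq (hyperlink R e) m k.+1) /\
         vle (xseq (hyperlink R e) m k.+1) xs)
    & xseq (hyperlink R e) m k @[k --> \oo] --> xs].
Proof.
(* The upper bound comes from monotone convergence. *)
move=> _ outdeg_gt0 /andP[m_gt0 m_lt1] [xs_fix _].
have A_ge0 := hyperlink_ge0 R e.
have A_colsum := hyperlink_colsum R e outdeg_gt0.
have c_range : 0 <= 1 - m < 1 by rewrite subr_ge0 ltW //= ltrBlDr ltrDl.
have z_ge0 k i : 0 <= zseq (hyperlink R e) m k i 0.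
  rewrite zseqE; apply: iter_damped_ge0 => // [|j].
    by case/andP: c_range.
  by rewrite !mxE mulr1 divr_ge0 // ltW.
have x_incr k : vle (xseq (hyperlink R e) m k) (xseq (hyperlink R e) m k.+1).
  by move=> i; rewrite /= [X in _ <= X]mxE lerDl; apply: (z_ge0 k.+1).
have x_cvg : xseq (hyperlink R e) m k @[k --> \oo] --> xs.
  under eq_fun do rewrite (xseq_fixpointE xs_fix).
  have tail_cvg0 : iter k.+1 (damped (hyperlink R e) (1 - m)) xs @[k --> \oo]
      --> (0 : 'cV[R]_n).
    have := iter_damped_cvg0 xs A_ge0 A_colsum c_range.
    by rewrite -(cvg_shiftS (fun k => iter k _ xs)).
  by apply: cvg_trans (cvgB (cvg_cst xs) tail_cvg0) _; rewrite subr0.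
split => //.
- by under eq_fun do rewrite zseqE; apply: iter_damped_cvg0.
- by move=> k; split => //; apply: nondecreasing_cvg_vle x_incr x_cvg k.+1.
Qed.
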